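(* Let $g\in\mathbb{I}_{\geq1}$, $c\in\mathbb{I}_{\geq g}$, $b\in\mathbb{I}_{\geq c}$ be integers with $q:=\lceil c/g\rceil\geq 2$. Let $\mathbb{X}_p\subseteq\mathbb{R}^{n_p}$, $\mathbb{U}_p\subseteq\mathbb{R}^{m_p}$ be closed sets containing the origin, $f_p:\mathbb{R}^{n_p}\times\mathbb{R}^{m_p}\to\mathbb{R}^{n_p}$ with $f_p(0,0)=0$, $\mathbb{X}_{f,p}\subseteq\mathbb{X}_p$ closed containing the origin, and $k_p:\mathbb{X}_{f,p}\to\mathbb{U}_p$. Consider the system $x^+=f(x,u)$ with state $x=(x_p,u_s,\beta)$, input $u=(u_c,\gamma,\delta)$ with $\gamma,\delta\in\{0,1\}$, $\gamma+\delta\leq1$, and $$f(x,u)=\big(f_p(x_p,(\gamma+\delta)u_c+(1-\gamma-\delta)u_s),\ (\gamma+\delta)u_c+(1-\gamma-\delta)u_s,\ \min\{\beta+(1-\delta)g-\gamma c,\,b\}\big).$$ Let $\mathbb{X}_f:=\mathbb{X}_{f,p}\times\mathbb{U}_p\times\mathbb{I}_{[0,b]}$, the terminal control sequence $\kappa_0(x):=(k_p(x_p),0,1)$ and $\kappa_j(x):=(0,0,0)$ for $j\in\mathbb{I}_{[1,q-1]}$, $f_0(x):=x$, $f_i(x):=f(f_{i-1}(x),\kappa_{(i-1)\bmod q}(f_{i-1}(x)))$, and let $f_{\beta,i}(x)$ be the last component of $f_i(x)$. For $\sigma>0$ let $V_{f,\beta}(\beta):=\sigma(b^2-\beta^2)$.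 Then there exists $\alpha:\mathbb{I}_{[0,b]}\to\mathbb{R}$ with $\alpha(b)=0$ and $\alpha(\beta)>0$ for all $\beta\in\mathbb{I}_{[0,b-1]}$ such that for all $x\in\mathbb{X}_f$, $$V_{f,\beta}(f_{\beta,q}(x))-V_{f,\beta}(\beta)\leq-\alpha(\beta).$$
   Context: $\mathbb{I}$ denotes the integers, $\mathbb{I}_{[a,b]}:=\mathbb{I}\cap[a,b]$, $\mathbb{I}_{\geq a}:=\mathbb{I}\cap[a,\infty)$. The component $\beta$ is the token level of a token bucket (size $b$, token rate $g$, transmission cost $c$); $\gamma=1$ denotes a transmission subject to the token bucket and $\delta=1$ a transmission over a direct link that consumes no tokens and during which no tokens are added. *)

From HB Require Import structures.
From mathcomp Require Import all_boot all_order all_algebra.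
From mathcomp Require Import all_classical all_reals all_analysis.
Set Implicit Arguments. Unset Strict Implicit. Unset Printing Implicit Defensive.
Import Order.TTheory GRing.Theory Num.Theory.
Local Open Scope ring_scope.

Definition tb_state (R : realType) (np mp : nat) : Type :=
  ('rV[R]_np * 'rV[R]_mp * int)%type.
Definition tb_input (R : realType) (mp : nat) : Type :=
  ('rV[R]_mp * int * int)%type.

Definition tb_q (g c : int) : nat := `|Num.ceil ((c%:~R : rat) / g%:~R)|%N.

Definition tb_f (R : realType) (np mp : nat)
  (fp : 'rV[R]_np -> 'rV[R]_mp -> 'rV[R]_np) (g c b : int)
  (x : tb_state R np mp) (u : tb_input R mp) : tb_state R np mp :=
  let: (xp, us, beta) := x in
  let: (uc, gam, del) := u in
  let uapp := ((gam + del)%:~R : R) *: uc + ((1 - gam - del)%:~R : R) *: us in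
  (fp xp uapp, uapp, Order.min (beta + (1 - del) * g - gam * c) b).

Definition tb_kappa (R : realType) (np mp : nat) (kp : 'rV[R]_np -> 'rV[R]_mp)
  (j : nat) (x : tb_state R np mp) : tb_input R mp :=
  if j == 0%N then (kp x.1.1, 0%R, 1%R) else (0%R, 0%R, 0%R).

Fixpoint tb_fi (R : realType) (np mp : nat)
  (fp : 'rV[R]_np -> 'rV[R]_mp -> 'rV[R]_np) (kp : 'rV[R]_np -> 'rV[R]_mp)
  (g c b : int) (q : nat) (i : nat) (x : tb_state R np mp) : tb_state R np mp :=
  match i with
  | 0 => x
  | i'.+1 => let y := tb_fi fp kp g c b q i' x in
             tb_f fp g c b y (tb_kappa kp (i' %% q) y)
  end.

Definition tb_Vf (R : realType) (sigma : R) (b beta : int) : R :=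
  sigma * ((b%:~R) ^+ 2 - (beta%:~R) ^+ 2).

From HB Require Import structures.
From mathcomp Require Import all_boot all_order all_algebra.
From mathcomp Require Import all_classical all_reals all_analysis.
Import Order.TTheory GRing.Theory Num.Theory numFieldTopology.Exports.
Local Open Scope ring_scope.
Local Open Scope classical_set_scope.

(* Under the terminal control sequence the token level ignores the plant: the
   first step of a period is a direct-link transmission, which leaves [beta]
   unchanged, and each of the remaining [q - 1] idle steps adds [g] tokens up
   to the bucket size.  After one period [beta] has thus become
   [min (beta + (q - 1) g, b)], which is strictly larger than [beta] unless
   [beta = b] because [q >= 2], and [V_{f,beta}] is strictly decreasing on
   nonnegative levels.  The decrease [alpha] is simply taken to be the exact
   decrease of [V_{f,beta}] over one period. *)

Lemma addr_min_capl (R : realDomainType) (x y d : R) :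
  0 <= d -> Num.min (Num.min x y + d) y = Num.min (x + d) y.
Proof.
move=> d_ge0; rewrite addr_minl -minA.
by congr Num.min; apply/min_idPr; rewrite lerDl.
Qed.

Lemma tb_Vf_decr (R : realType) (sigma : R) (b beta beta' : int) :
  0 < sigma -> 0 <= beta -> beta < beta' ->
  tb_Vf sigma b beta' < tb_Vf sigma b beta.
Proof.
move=> sigma_gt0 beta_ge0 lt_beta; rewrite /tb_Vf ltr_pM2l // ltrD2l ltrN2.
by rewrite ltrXn2r // ?ler0z ?ltr_int // (le_trans beta_ge0) // ltW.
Qed.

Section TokenLevel.

Variables (R : realType) (np mp : nat).
Variables (fp : 'rV[R]_np -> 'rV[R]_mp -> 'rV[R]_np) (kp : 'rV[R]_np -> 'rV[R]_mp).
Variables (g c b : int) (q : nat).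

Let fi := tb_fi fp kp g c b q.

Lemma tb_f_beta (x : tb_state R np mp) (u : tb_input R mp) :
  (tb_f fp g c b x u).2 = Num.min (x.2 + (1 - u.2) * g - u.1.2 * c) b.
Proof. by case: x => [[? ?] ?]; case: u => [[? ?] ?]. Qed.

Lemma tb_fi_beta1 (x : tb_state R np mp) : (fi 1 x).2 = Num.min x.2 b.
Proof. by rewrite /fi /= tb_f_beta mod0n /= subrr !mul0r subr0 addr0. Qed.

Lemma tb_fi_betaS (i : nat) (x : tb_state R np mp) :
  (0 < i < q)%N -> (fi i.+1 x).2 = Num.min ((fi i x).2 + g) b.
Proof.
case/andP=> i_gt0 lt_iq; rewrite /fi /= tb_f_beta modn_small //.
by rewrite /tb_kappa (gtn_eqF i_gt0) /= mul0r !subr0 mul1r.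
Qed.

Lemma tb_fi_beta (i : nat) (x : tb_state R np mp) :
  0 <= g -> x.2 <= b -> (0 < i <= q)%N ->
  (fi i x).2 = Num.min (x.2 + i.-1%:Z * g) b.
Proof.
move=> g_ge0 beta_le_b; elim: i => [//|[|i] IH] /andP[_ le_iq].
  by rewrite tb_fi_beta1 mul0r addr0.
rewrite tb_fi_betaS ?IH ?(ltnW le_iq) // addr_min_capl // -addrA.
by rewrite -[in i.+1%:Z]addn1 PoszD mulrDl mul1r.
Qed.

End TokenLevel.

Definition tb_beta_period (g b : int) (q : nat) (beta : int) : int :=
  Num.min (beta + q.-1%:Z * g) b.

Lemma tb_beta_period_b (g b : int) (q : nat) :
  0 <= g -> tb_beta_period g b q b = b.
Proof. by move=> g_ge0; apply/min_idPr; rewrite lerDl mulr_ge0. Qed.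

Lemma tb_beta_period_gt (g b : int) (q : nat) (beta : int) :
  0 < g -> (2 <= q)%N -> beta < b -> beta < tb_beta_period g b q beta.
Proof.
move=> g_gt0 q_ge2 lt_beta_b; rewrite lt_min lt_beta_b andbT ltrDl.
by rewrite mulr_gt0 // ltz_nat -ltnS (prednK (ltnW q_ge2)).
Qed.

Theorem lemma3 (R : realType) (np mp : nat) (g c b : int)
  (Xp : set 'rV[R]_np) (Up : set 'rV[R]_mp) (Xfp : set 'rV[R]_np)
  (fp : 'rV[R]_np -> 'rV[R]_mp -> 'rV[R]_np) (kp : 'rV[R]_np -> 'rV[R]_mp)
  (sigma : R) :
  1 <= g -> g <= c -> c <= b -> (2 <= tb_q g c)%N ->
  closed Xp -> Xp 0 -> closed Up -> Up 0 ->
  fp 0 0 = 0 ->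
  closed Xfp -> Xfp 0 -> Xfp `<=` Xp ->
  (forall xp, Xfp xp -> Up (kp xp)) ->
  0 < sigma ->
  exists alpha : int -> R,
    alpha b = 0 /\
    (forall beta : int, 0 <= beta <= b - 1 -> 0 < alpha beta) /\
    (forall (xp : 'rV[R]_np) (us : 'rV[R]_mp) (beta : int),
        Xfp xp -> Up us -> 0 <= beta <= b ->
        tb_Vf sigma b (tb_fi fp kp g c b (tb_q g c) (tb_q g c) (xp, us, beta)).2
          - tb_Vf sigma b beta <= - alpha beta).
Proof.
move=> g_ge1 _ _ q_ge2 _ _ _ _ _ _ _ _ _ sigma_gt0.
have g_gt0 : 0 < g by apply: lt_le_trans g_ge1.
pose period := tb_beta_period g b (tb_q g c).
exists (fun beta => tb_Vf sigma b beta - tb_Vf sigma b (period beta)).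
split; [|split].
- by rewrite /period tb_beta_period_b ?subrr //; exact: ltW.
- move=> beta /andP[beta_ge0 lt_beta_b]; rewrite subr_gt0 tb_Vf_decr //.
  by apply: tb_beta_period_gt; rewrite // -(subrK 1 b) ltzD1.
- move=> xp us beta _ _ /andP[_ beta_le_b].
  rewrite tb_fi_beta; [rewrite opprB; exact: lexx | exact: ltW | exact: beta_le_b |].
  by apply/andP; split; [exact: ltnW | exact: leqnn].
Qed.
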